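(* Let $M$ be a monoid, let $\sigma : X^+ \to M$ be a semigroup choice of generators for $M$, and let $\tau : X^* \to M$ be the unique extension of $\sigma$ to a monoid choice of generators. Then $$L_\sigma(M) = L_\tau(M) \cap \big(X \hat{X}^* \overline{X} \cup \{\epsilon\}\big),$$ and there exists a word $w \in X^+$ such that $$L_\tau(M) = \{u \in \hat{X}^* : w u \overline{w} \in L_\sigma(M)\}.$$
   Context: Maps are written on the right. $X^*$, $X^+$: free monoid (with empty word $\epsilon$) and free semigroup on $X$. Let $\overline{X} = \{\overline{x} : x \in X\}$ be new symbols, $\hat{X} = X \cup \overline{X}$, and extend $x \mapsto \overline{x}$ to an involution of $\hat{X}^*$ by $\overline{\overline{x}} = x$ and $\overline{x_1 \cdots x_n} = \overline{x_n}\cdots\overline{x_1}$. For a monoid $M$ and surjective monoid morphism $\tau : X^* \to M$, the loop automaton has vertex set $M$, for each $a \in M$, $x \in X$ an edge $a \to a(x\tau)$ labelled $x$ and an edge $a(x\tau) \to a$ labelled $\overline{x}$; the loop problem $L_\tau(M) \subseteq \hat{X}^*$ is the set of labels of paths from the identity to the identity. For a semigroup $S$ (here $S = M$ regarded as a semigroup) and surjective morphism $\sigma : X^+ \to S$, $L_\sigma(S)$ is the loop problem of $S^1$ ($S$ with a new identity adjoined, even though $M$ already has one) with respect to the unique extension $\sigma^1 : X^* \to S^1$. *)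

From Stdlib Require Import List.
Import ListNotations.
Set Implicit Arguments.

(* Letters of \hat X = X ∪ \bar X: [inl x] is x, [inr x] is \bar x. *)
Definition hat (X : Type) : Type := (X + X)%type.

Definition pos (X : Type) (w : list X) : list (hat X) := map (@inl X X) w.

Definition bar_letter (X : Type) (a : hat X) : hat X :=
  match a with inl x => inr x | inr x => inl x end.
Definition bar_word (X : Type) (u : list (hat X)) : list (hat X) :=
  rev (map (@bar_letter X) u).

Definition evalw (T X : Type) (mul : T -> T -> T) (one : T) (g : X -> T)
  (w : list X) : T := fold_right (fun x m => mul (g x) m) one w.

(* Paths in the loop automaton of (T, mul, one) w.r.t. generator images g:
   edges a --x--> a (x g) and a (x g) --\bar x--> a.
   [lpath a u b] : there is a path from a to b labelled u. *)
Fixpoint lpath (T X : Type) (mul : T -> T -> T) (g : X -> T)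
  (a : T) (u : list (hat X)) (b : T) : Prop :=
  match u with
  | [] => a = b
  | inl x :: u' => lpath mul g (mul a (g x)) u' b
  | inr x :: u' => exists a', mul a' (g x) = a /\ lpath mul g a' u' b
  end.

Definition loop_problem (T X : Type) (mul : T -> T -> T) (one : T) (g : X -> T)
  (u : list (hat X)) : Prop := lpath mul g one u one.

(* S^1 : the semigroup S with a new identity adjoined ([None]). *)
Definition mul1 (S : Type) (mul : S -> S -> S) (a b : option S) : option S :=
  match a, b with
  | None, _ => b
  | _, None => a
  | Some a', Some b' => Some (mul a' b')
  end.

Definition L_monoid (M X : Type) (mul : M -> M -> M) (one : M) (g : X -> M)
  : list (hat X) -> Prop := loop_problem mul one g.

(* L_sigma(M) for the semigroup choice sigma : X^+ -> M, x sigma = g x: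
   loop problem of M^1 (new identity adjoined) w.r.t. sigma^1. *)
Definition L_semigroup (M X : Type) (mul : M -> M -> M) (g : X -> M)
  : list (hat X) -> Prop :=
  loop_problem (@mul1 M mul) None (fun x => Some (g x)).

Definition XhatXbarX (X : Type) (u : list (hat X)) : Prop :=
  u = [] \/ exists x y v, u = inl x :: v ++ [inr y].

(* A path of the loop automaton of M^1 that never visits the new identity is
   exactly a path of the automaton of M, and leaving (resp. entering) the new
   identity is only possible along a positive (resp. negative) letter; this
   gives the first equality.  For the second, pick a nonempty w representing the
   identity of M: reading w from any vertex of the automaton of M returns to that
   vertex, so conjugating by w does not change membership in L_tau(M), while the
   conjugate w u w-bar always has the shape X X-hat^* X-bar. *)
From Stdlib Require Import List.
Import ListNotations.

Lemma bar_wordK (X : Type) (u : list (hat X)) : bar_word (bar_word u) = u.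
Proof.
  unfold bar_word. rewrite map_rev, rev_involutive, map_map.
  rewrite <- map_id. apply map_ext. intros [x|x]; reflexivity.
Qed.

Lemma bar_word_pos_cons (X : Type) (x : X) (w : list X) :
  bar_word (pos (x :: w)) = bar_word (pos w) ++ [inr x].
Proof. reflexivity. Qed.

Lemma XhatXbarX_conj (X : Type) (w : list X) (u : list (hat X)) :
  w <> [] -> XhatXbarX (pos w ++ u ++ bar_word (pos w)).
Proof.
  destruct w as [|x w]; [contradiction|]. intros _. right.
  exists x, x, (pos w ++ u ++ bar_word (pos w)).
  rewrite bar_word_pos_cons, !app_assoc. reflexivity.
Qed.

Section LoopAutomaton.
Context {T X : Type} (mul : T -> T -> T) (g : X -> T).

Local Notation lpath := (lpath mul g).

Lemma lpath_cat a u v b :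
  lpath a (u ++ v) b <-> exists c, lpath a u c /\ lpath c v b.
Proof.
  revert a; induction u as [|[x|x] u IH]; intros a; simpl.
  - split; [intros H; exists a; auto | intros [c [-> H]]; auto].
  - rewrite IH. reflexivity.
  - split.
    + intros [a' [E H]]. apply IH in H as [c [H1 H2]]. eauto.
    + intros [c [[a' [E H1]] H2]]. exists a'. split; auto. apply IH. eauto.
Qed.

Lemma lpath_bar a u b : lpath a u b -> lpath b (bar_word u) a.
Proof.
  revert a; induction u as [|[x|x] u IH]; intros a H; simpl in *.
  - subst; reflexivity.
  - apply lpath_cat. exists (mul a (g x)). split; [apply IH; auto|].
    simpl. exists a. auto.
  - destruct H as [a' [E H]]. apply lpath_cat.
    exists a'. split; [apply IH; auto|]. simpl. auto.
Qed.

Lemma lpath_barE a u b : lpath a u b <-> lpath b (bar_word u) a.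
Proof.
  split; [apply lpath_bar|]. intros H.
  apply lpath_bar in H. rewrite bar_wordK in H. exact H.
Qed.

Lemma lpath_conj p u a b :
  (forall c d, lpath c p d <-> d = c) ->
  lpath a (p ++ u ++ bar_word p) b <-> lpath a u b.
Proof.
  intros Hp. rewrite lpath_cat. split.
  - intros [c [Hac H]]. apply lpath_cat in H as [d [Hcd Hdb]].
    apply Hp in Hac. apply lpath_barE, Hp in Hdb. subst. exact Hcd.
  - intros H. exists a. split; [apply Hp; reflexivity|].
    apply lpath_cat. exists b. split; [exact H|]. apply (lpath_barE b p b), Hp. reflexivity.
Qed.

Lemma lpath_wrapE (e : T) (mule : forall a, mul e a = a) x y v :
  lpath e (inl x :: v ++ [inr y]) e <-> lpath (g x) v (g y).
Proof.
  simpl. rewrite mule, lpath_cat. simpl. split.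
  - intros [c [H [a' [E ->]]]]. rewrite mule in E. subst. exact H.
  - intros H. exists (g y). split; [exact H|]. exists e. auto.
Qed.

End LoopAutomaton.

Section MonoidPaths.
Context {M X : Type} (mul : M -> M -> M) (one : M)
  (mulA : forall a b c, mul a (mul b c) = mul (mul a b) c)
  (mulm1 : forall a, mul a one = a) (g : X -> M).

Lemma lpath_pos w a b :
  lpath mul g a (pos w) b <-> b = mul a (evalw mul one g w).
Proof.
  revert a; induction w as [|x w IH]; intros a; simpl.
  - rewrite mulm1. split; intros; symmetry; assumption.
  - rewrite IH, mulA. reflexivity.
Qed.

Lemma lpath_pos_one w :
  evalw mul one g w = one -> forall a b, lpath mul g a (pos w) b <-> b = a.
Proof. intros Hw a b. rewrite lpath_pos, Hw, mulm1. reflexivity. Qed.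

End MonoidPaths.

Section AdjoinedIdentity.
Context {M X : Type} (mul : M -> M -> M) (one : M)
  (mul1m : forall a, mul one a = a) (g : X -> M).

Local Notation lpath1 := (lpath (mul1 mul) (fun x => Some (g x))).

Definition forget_one (a : option M) : M :=
  match a with None => one | Some a => a end.

Lemma lpath_forget_one u a b :
  lpath1 a u b -> lpath mul g (forget_one a) u (forget_one b).
Proof.
  revert a; induction u as [|[x|x] u IH]; intros a H; simpl in *.
  - subst; reflexivity.
  - apply IH in H. destruct a; simpl in *; [exact H|]. rewrite mul1m. exact H.
  - destruct H as [a' [E H]]. exists (forget_one a'). split; auto.
    subst. destruct a'; simpl; auto.
Qed.

Lemma lpath_adjoin_one u a b :
  lpath mul g a u b -> lpath1 (Some a) u (Some b).
Proof.
  revert a; induction u as [|[x|x] u IH]; intros a H; simpl in *.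
  - subst; reflexivity.
  - apply IH in H. exact H.
  - destruct H as [a' [E H]]. exists (Some a'). subst. auto.
Qed.

Lemma lpath1_None_inr x u b : ~ lpath1 None (inr x :: u) b.
Proof. simpl. intros [[a'|] [E _]]; discriminate. Qed.

Lemma lpath1_inl_None x u a : ~ lpath1 a (u ++ [inl x]) None.
Proof.
  rewrite lpath_cat. simpl. intros [[c|] [_ E]]; discriminate.
Qed.

Lemma lpath1_loop_shape u : lpath1 None u None -> XhatXbarX u.
Proof.
  intros H. destruct u as [|[x|x] v]; [left; reflexivity| |].
  - right. induction v as [|[y|y] v _] using rev_ind.
    + exfalso. exact (lpath1_inl_None x [] None H).
    + exfalso. exact (lpath1_inl_None y (inl x :: v) None H).
    + exists x, y, v. reflexivity.
  - exfalso. exact (lpath1_None_inr x v None H).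
Qed.

Lemma L_semigroupE u :
  L_semigroup mul g u <-> L_monoid mul one g u /\ XhatXbarX u.
Proof.
  unfold L_semigroup, L_monoid, loop_problem. split.
  - intros H. split; [apply (lpath_forget_one _ _ _ H) | apply lpath1_loop_shape, H].
  - intros [H [->|[x [y [v ->]]]]]; [reflexivity|].
    apply lpath_wrapE; [reflexivity|].
    apply lpath_adjoin_one, (lpath_wrapE mul g one mul1m), H.
Qed.

End AdjoinedIdentity.

Lemma L_monoid_conjE {M X : Type} (mul : M -> M -> M) (one : M)
  (mulA : forall a b c, mul a (mul b c) = mul (mul a b) c)
  (mul1m : forall a, mul one a = a) (mulm1 : forall a, mul a one = a)
  (g : X -> M) (w : list X) (u : list (hat X)) :
  w <> [] -> evalw mul one g w = one ->
  L_monoid mul one g u <-> L_semigroup mul g (pos w ++ u ++ bar_word (pos w)).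
Proof.
  intros Hne Hw. rewrite (L_semigroupE mul one mul1m).
  unfold L_monoid, loop_problem.
  rewrite lpath_conj by exact (lpath_pos_one mul one mulA mulm1 g w Hw).
  split; [intros H; split; [exact H | apply XhatXbarX_conj, Hne] | tauto].
Qed.

Theorem proposition4p7
  (M X : Type) (mul : M -> M -> M) (one : M)
  (mulA : forall a b c, mul a (mul b c) = mul (mul a b) c)
  (mul1m : forall a, mul one a = a) (mulm1 : forall a, mul a one = a)
  (g : X -> M)
  (* sigma : X^+ -> M, x sigma = g x, is surjective *)
  (sigma_surj : forall m : M, exists w : list X, w <> [] /\ evalw mul one g w = m) :
  (forall u : list (hat X),
     L_semigroup mul g u <-> (L_monoid mul one g u /\ XhatXbarX u)) /\
  (exists w : list X, w <> [] /\
     forall u : list (hat X),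
       L_monoid mul one g u <-> L_semigroup mul g (pos w ++ u ++ bar_word (pos w))).
Proof.
  split; [exact (L_semigroupE mul one mul1m g)|].
  destruct (sigma_surj one) as [w [Hne Hw]].
  exists w. split; [exact Hne|].
  intros u. apply L_monoid_conjE; assumption.
Qed.
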